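(* Let $R\ge1$, $L\ge2$, and let $f_\theta,f_{\tilde\theta}\in\mathcal{N}_\rho(L,\boldsymbol n_L,R)$ share the same architecture, with parameter vectors $\theta,\tilde\theta\in\mathbb{R}^{\boldsymbol n_L}$. Set $\eta=1$ if $\rho$ is the sigmoid and $\eta=2$ if $\rho=\tanh$. Then for every $p\in\{1,\dots,d\}$ and $x\in\Omega$, $$|\partial_{x_p}^2f_\theta(x)-\partial_{x_p}^2f_{\tilde\theta}(x)|\le2(L-1)L\eta\sqrt{\boldsymbol n_L}\,\pi_{L-1}^3R^{3L-3}\|\theta-\tilde\theta\|_{\ell^2}.$$
   Context: $\Omega\subset(-1,1)^d$. Neural networks: widths $n_0=d,n_1,\dots,n_L=1$; $f^{(0)}(x)=x$, $f^{(\ell)}(x)=\rho(A^{(\ell)}f^{(\ell-1)}(x)+b^{(\ell)})$ for $\ell=1,\dots,L-1$ (componentwise $\rho$), $f_\theta=A^{(L)}f^{(L-1)}+b^{(L)}$, with $A^{(\ell)}\in\mathbb{R}^{n_\ell\times n_{\ell-1}}$, $b^{(\ell)}\in\mathbb{R}^{n_\ell}$; $\theta$ is the vector of all parameters (entries of all $A^{(\ell)},b^{(\ell)}$), $\boldsymbol n_L$ its number of (nonzero) entries; $\mathcal{N}_\rho(L,\boldsymbol n_L,R)$ is the class of such networks with all parameters bounded in absolute value by $R$. $\pi_i=\prod_{j=1}^in_j$. $\rho$ is $\tanh$ or the sigmoid $1/(1+e^{-t})$. *)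

From Stdlib Require Import Reals Lra.
From Coquelicot Require Import Coquelicot.
Open Scope R_scope.

Fixpoint sumR (n : nat) (f : nat -> R) : R :=
  match n with O => 0 | S k => sumR k f + f k end.

Fixpoint prod_widths (ns : nat -> nat) (m : nat) : nat :=
  match m with O => 1%nat | S k => (prod_widths ns k * ns (S k))%nat end.

Inductive activation := Sigmoid | Tanh.

Definition tanhR (t : R) : R := (exp t - exp (- t)) / (exp t + exp (- t)).
Definition sigmoid (t : R) : R := 1 / (1 + exp (- t)).

Definition rho (a : activation) (t : R) : R :=
  match a with Sigmoid => sigmoid t | Tanh => tanhR t end.

Definition eta (a : activation) : R :=
  match a with Sigmoid => 1 | Tanh => 2 end.

(** Architecture: widths ns 0 = d, ns 1, ..., ns L = 1.
    Parameters: A l i j = entry (i,j) of A^(l) (0-based i < ns l, j < ns (l-1)),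
                b l i   = entry i of b^(l), layers l = 1..L. *)
Record params := mkParams { pA : nat -> nat -> nat -> R; pb : nat -> nat -> R }.

Fixpoint hidden (a : activation) (ns : nat -> nat) (th : params) (l : nat)
    (x : nat -> R) : nat -> R :=
  match l with
  | O => x
  | S k => fun i =>
      rho a (sumR (ns k) (fun j => pA th (S k) i j * hidden a ns th k x j)
             + pb th (S k) i)
  end.

Definition net (a : activation) (ns : nat -> nat) (L : nat) (th : params)
    (x : nat -> R) : R :=
  sumR (ns (L - 1)%nat) (fun j => pA th L 0%nat j * hidden a ns th (L - 1) x j)
  + pb th L 0%nat.

Definition num_params (ns : nat -> nat) (L : nat) : nat :=
  let fix go l := match l with
    | O => O
    | S k => (go k + ns (S k) * ns k + ns (S k))%nat end in go L.

Definition params_bounded (ns : nat -> nat) (L : nat) (Rb : R) (th : params) : Prop :=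
  forall l, (1 <= l <= L)%nat ->
    (forall i j, (i < ns l)%nat -> (j < ns (l - 1))%nat -> Rabs (pA th l i j) <= Rb) /\
    (forall i, (i < ns l)%nat -> Rabs (pb th l i) <= Rb).

Definition param_dist (ns : nat -> nat) (L : nat) (th th' : params) : R :=
  sqrt (sumR L (fun k =>
          sumR (ns (S k)) (fun i =>
            sumR (ns k) (fun j => (pA th (S k) i j - pA th' (S k) i j) ^ 2)
            + (pb th (S k) i - pb th' (S k) i) ^ 2))).

Definition upd (x : nat -> R) (p : nat) (t : R) : nat -> R :=
  fun i => if Nat.eqb i p then t else x i.

Definition dxx (F : (nat -> R) -> R) (p : nat) (x : nat -> R) : R :=
  Derive_n (fun t => F (upd x p t)) 2 (x p).

From Stdlib Require Import Reals Lra Psatz Lia.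
From Coquelicot Require Import Coquelicot.
Open Scope R_scope.

(** Fix the input [x] and vary only its [p]-th coordinate [t].  By the chain
    rule, the hidden layers [f^(k)] and their first and second [t]-derivatives
    obey explicit recursions ([d1], [d2]), and the second derivative of the
    output is [A^(L)] applied to the second derivative of [f^(L-1)]
    ([dxx_net]).

    With [U_k = Rb^k pi_k], forward bounds come first ([forward_bounds]):
    [|f^(k)| <= 1] entrywise, [|f^(k)'|_1 <= U_k], [|f^(k)''|_1 <= kappa k U_k^2],
    where [kappa] bounds [|rho''|] and [2 kappa] bounds [|rho'''|].  Then,
    comparing two parameter vectors, an induction over layers
    ([perturbation_bounds]) controls the l1 distances of [f], [f'], [f''] by
    [E_k U_k], [2k E_k U_k^2] and [kappa (3k^2+k) E_k U_k^3], where [E_k] is the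
    l1 distance of the parameters of the first [k] layers; each step combines
    the Lipschitz bounds of [rho], [rho'], [rho''] with the product rule.  The
    output layer yields [kappa (3K^2+2K) E_L U_K^3] with [K = L - 1]
    ([output_perturbation]), Cauchy-Schwarz gives
    [E_L <= sqrt n_L |theta - theta'|_2], and [2 kappa <= eta] turns the
    constant into [2 (L-1) L eta]. *)

Lemma sumR_ext n f g : (forall i, (i < n)%nat -> f i = g i) -> sumR n f = sumR n g.
Proof.
  induction n as [|n IH]; intros H; simpl; [reflexivity|].
  rewrite IH by (intros; apply H; lia). rewrite H by lia. reflexivity.
Qed.

Lemma sumR_plus n f g : sumR n (fun i => f i + g i) = sumR n f + sumR n g.
Proof. induction n as [|n IH]; simpl; [lra|]. rewrite IH. lra. Qed.

Lemma sumR_minus n f g : sumR n (fun i => f i - g i) = sumR n f - sumR n g.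
Proof. induction n as [|n IH]; simpl; [lra|]. rewrite IH. lra. Qed.

Lemma sumR_scal n c f : sumR n (fun i => c * f i) = c * sumR n f.
Proof. induction n as [|n IH]; simpl; [lra|]. rewrite IH. lra. Qed.

Lemma sumR_const n c : sumR n (fun _ => c) = INR n * c.
Proof. induction n as [|n IH]; simpl sumR; [simpl; lra|]. rewrite IH, S_INR. lra. Qed.

Lemma sumR_le n f g : (forall i, (i < n)%nat -> f i <= g i) -> sumR n f <= sumR n g.
Proof.
  induction n as [|n IH]; simpl; intros H; [lra|].
  pose proof (H n ltac:(lia)). pose proof (IH ltac:(intros; apply H; lia)). lra.
Qed.

Lemma sumR_nonneg n f : (forall i, (i < n)%nat -> 0 <= f i) -> 0 <= sumR n f.
Proof.
  intros H. replace 0 with (sumR n (fun _ => 0)) by (rewrite sumR_const; lra).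
  apply sumR_le; auto.
Qed.

Lemma sumR_abs n f : Rabs (sumR n f) <= sumR n (fun i => Rabs (f i)).
Proof.
  induction n as [|n IH]; simpl; [rewrite Rabs_R0; lra|].
  eapply Rle_trans; [apply Rabs_triang|]. lra.
Qed.

Lemma sumR_abs_nonneg n f : 0 <= sumR n (fun i => Rabs (f i)).
Proof. apply sumR_nonneg. intros; apply Rabs_pos. Qed.

Lemma term_le_sumR n f i :
  (forall j, (j < n)%nat -> 0 <= f j) -> (i < n)%nat -> f i <= sumR n f.
Proof.
  induction n as [|n IH]; intros H Hi; [lia|]. simpl.
  pose proof (H n ltac:(lia)).
  destruct (Nat.eq_dec i n) as [->|Hne].
  - pose proof (sumR_nonneg n f ltac:(intros; apply H; lia)). lra.
  - pose proof (IH ltac:(intros; apply H; lia) ltac:(lia)). lra.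
Qed.

Lemma abs_le_l1 n v i : (i < n)%nat -> Rabs (v i) <= sumR n (fun j => Rabs (v j)).
Proof. intros Hi. apply (term_le_sumR n (fun j => Rabs (v j))); auto. intros; apply Rabs_pos. Qed.

Lemma dot_bound_l1 n (c v : nat -> R) C V : 0 <= C ->
  (forall j, (j < n)%nat -> Rabs (c j) <= C) -> sumR n (fun j => Rabs (v j)) <= V ->
  Rabs (sumR n (fun j => c j * v j)) <= C * V.
Proof.
  intros HC Hc HV. eapply Rle_trans; [apply sumR_abs|].
  apply Rle_trans with (sumR n (fun j => C * Rabs (v j))).
  - apply sumR_le. intros j Hj. rewrite Rabs_mult.
    apply Rmult_le_compat_r; [apply Rabs_pos|auto].
  - rewrite sumR_scal. apply Rmult_le_compat_l; auto.
Qed.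

Lemma dot_bound_sup n (c v : nat -> R) M :
  (forall j, (j < n)%nat -> Rabs (v j) <= M) ->
  Rabs (sumR n (fun j => c j * v j)) <= sumR n (fun j => Rabs (c j)) * M.
Proof.
  intros Hv. eapply Rle_trans; [apply sumR_abs|].
  rewrite Rmult_comm, <- sumR_scal. apply sumR_le. intros j Hj.
  rewrite Rabs_mult, Rmult_comm. apply Rmult_le_compat_r; [apply Rabs_pos|auto].
Qed.

(** Perturbation of a dot product: splitting
    [c.v - c'.v' = (c - c').v + c'.(v - v')] and applying both Hoelder bounds. *)
Lemma dot_perturbation n (c c' v v' : nat -> R) M C V : 0 <= C ->
  (forall j, (j < n)%nat -> Rabs (c' j) <= C) ->
  (forall j, (j < n)%nat -> Rabs (v j) <= M) ->
  sumR n (fun j => Rabs (v j - v' j)) <= V ->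
  Rabs (sumR n (fun j => c j * v j) - sumR n (fun j => c' j * v' j))
    <= sumR n (fun j => Rabs (c j - c' j)) * M + C * V.
Proof.
  intros HC Hc Hv HV.
  replace (sumR n (fun j => c j * v j) - sumR n (fun j => c' j * v' j)) with
    (sumR n (fun j => (c j - c' j) * v j) + sumR n (fun j => c' j * (v j - v' j))).
  - eapply Rle_trans; [apply Rabs_triang|]. apply Rplus_le_compat.
    + apply dot_bound_sup; auto.
    + apply dot_bound_l1; auto.
  - rewrite <- sumR_minus, <- sumR_plus. apply sumR_ext. intros; ring.
Qed.

(** The two-term case is the AM-GM step [2 u1 u2 <= c1 w2 + c2 w1]. *)
Lemma cauchy_schwarz_pair u1 u2 c1 c2 w1 w2 :
  0 <= u1 -> 0 <= u2 -> 0 <= c1 -> 0 <= c2 -> 0 <= w1 -> 0 <= w2 ->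
  u1 ^ 2 <= c1 * w1 -> u2 ^ 2 <= c2 * w2 -> (u1 + u2) ^ 2 <= (c1 + c2) * (w1 + w2).
Proof.
  intros. set (X := c1 * w2). set (Y := c2 * w1).
  assert (HX : 0 <= X) by (unfold X; nra). assert (HY : 0 <= Y) by (unfold Y; nra).
  assert (Hprod : (u1 * u2) ^ 2 <= X * Y).
  { replace ((u1 * u2) ^ 2) with (u1 ^ 2 * u2 ^ 2) by ring.
    replace (X * Y) with ((c1 * w1) * (c2 * w2)) by (unfold X, Y; ring).
    apply Rmult_le_compat; auto; apply pow2_ge_0. }
  assert (Hamgm : 2 * (u1 * u2) <= X + Y).
  { apply Rsqr_incr_0_var; [|lra]. unfold Rsqr. pose proof (pow2_ge_0 (X - Y)). nra. }
  unfold X, Y in Hamgm. nra.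
Qed.

Lemma cauchy_schwarz_sumR n (u c w : nat -> R) :
  (forall j, (j < n)%nat -> 0 <= u j /\ 0 <= c j /\ 0 <= w j /\ u j ^ 2 <= c j * w j) ->
  sumR n u ^ 2 <= sumR n c * sumR n w.
Proof.
  induction n as [|n IH]; intros H; simpl sumR; [lra|].
  destruct (H n ltac:(lia)) as [H1 [H2 [H3 H4]]].
  apply cauchy_schwarz_pair; auto;
    first [apply IH | apply sumR_nonneg]; intros; apply H; lia.
Qed.

Lemma abs_mul_le u v Bu Bv : Rabs u <= Bu -> Rabs v <= Bv -> Rabs (u * v) <= Bu * Bv.
Proof.
  intros Hu Hv. rewrite Rabs_mult.
  apply Rmult_le_compat; auto; apply Rabs_pos.
Qed.

(** Both activations satisfy a polynomial ODE
    [rho' = P (rho)] (sigmoid: [s (1 - s)], tanh: [1 - s^2]), so all their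
    derivatives are polynomials in [rho]; [rho1], [rho2], [rho3] are these. *)

Definition rho1 (a : activation) (t : R) : R :=
  match a with
  | Sigmoid => sigmoid t * (1 - sigmoid t)
  | Tanh => 1 - tanhR t ^ 2
  end.

Definition rho2 (a : activation) (t : R) : R :=
  match a with
  | Sigmoid => sigmoid t * (1 - sigmoid t) * (1 - 2 * sigmoid t)
  | Tanh => -2 * tanhR t * (1 - tanhR t ^ 2)
  end.

Definition rho3 (a : activation) (t : R) : R :=
  match a with
  | Sigmoid => sigmoid t * (1 - sigmoid t) * (1 - 6 * sigmoid t + 6 * sigmoid t ^ 2)
  | Tanh => -2 * (1 - tanhR t ^ 2) * (1 - 3 * tanhR t ^ 2)
  end.

(** [kappa a] bounds [|rho''|] and [2 kappa a] bounds [|rho'''|]. *)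
Definition kappa (a : activation) : R :=
  match a with Sigmoid => /4 | Tanh => 1 end.

Lemma kappa_range a : 0 <= kappa a <= 1.
Proof. destruct a; simpl; lra. Qed.

Lemma kappa_le_half_eta a : 2 * kappa a <= eta a.
Proof. destruct a; simpl; lra. Qed.

Lemma sigmoid_derive t : is_derive sigmoid t (sigmoid t * (1 - sigmoid t)).
Proof.
  unfold sigmoid. pose proof (exp_pos (- t)).
  auto_derive; [lra|]. field. lra.
Qed.

Lemma tanh_derive t : is_derive tanhR t (1 - tanhR t ^ 2).
Proof.
  unfold tanhR. pose proof (exp_pos (- t)). pose proof (exp_pos t).
  auto_derive; [lra|]. field. lra.
Qed.

Lemma sigmoid_range t : 0 <= sigmoid t <= 1.
Proof.
  unfold sigmoid. pose proof (exp_pos (- t)). split.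
  - apply Rlt_le, Rdiv_lt_0_compat; lra.
  - apply Rle_div_l; lra.
Qed.

Lemma tanh_range t : -1 <= tanhR t <= 1.
Proof.
  unfold tanhR. pose proof (exp_pos (- t)). pose proof (exp_pos t).
  assert (Hq : (exp t - exp (- t)) / (exp t + exp (- t)) * (exp t + exp (- t))
               = exp t - exp (- t)) by (field; lra).
  nra.
Qed.

Lemma derive_through_ode (S q g g' : R -> R) t :
  (forall y, is_derive S y (q (S y))) -> (forall y, is_derive g y (g' y)) ->
  is_derive (fun y => g (S y)) t (g' (S t) * q (S t)).
Proof.
  intros HS Hg. eapply is_derive_ext; [intros; reflexivity|].
  replace (g' (S t) * q (S t)) with (scal (q (S t)) (g' (S t)))
    by (unfold scal; simpl; unfold mult; simpl; ring).
  exact (is_derive_comp g S t _ _ (Hg (S t)) (HS t)).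
Qed.

Lemma rho_derive a t : is_derive (rho a) t (rho1 a t).
Proof. destruct a; [apply sigmoid_derive | apply tanh_derive]. Qed.

Lemma rho1_derive a t : is_derive (rho1 a) t (rho2 a t).
Proof.
  destruct a; simpl.
  - refine (eq_ind _ _ (derive_through_ode sigmoid (fun s => s * (1 - s))
      (fun s => s * (1 - s)) (fun s => 1 - 2 * s) t sigmoid_derive
      ltac:(intros; auto_derive; [auto|ring])) _ _). ring.
  - refine (eq_ind _ _ (derive_through_ode tanhR (fun s => 1 - s ^ 2)
      (fun s => 1 - s ^ 2) (fun s => - 2 * s) t tanh_derive
      ltac:(intros; auto_derive; [auto|ring])) _ _). ring.
Qed.

Lemma rho2_derive a t : is_derive (rho2 a) t (rho3 a t).
Proof.
  destruct a; simpl.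
  - refine (eq_ind _ _ (derive_through_ode sigmoid (fun s => s * (1 - s))
      (fun s => s * (1 - s) * (1 - 2 * s)) (fun s => 1 - 6 * s + 6 * s ^ 2) t
      sigmoid_derive ltac:(intros; auto_derive; [auto|ring])) _ _). ring.
  - refine (eq_ind _ _ (derive_through_ode tanhR (fun s => 1 - s ^ 2)
      (fun s => -2 * s * (1 - s ^ 2)) (fun s => - 2 + 6 * s ^ 2) t
      tanh_derive ltac:(intros; auto_derive; [auto|ring])) _ _). ring.
Qed.

(** Bounds [|rho|, |rho'| <= 1], [|rho''| <= kappa], [|rho'''| <= 2 kappa], read
    off the polynomials on [s in [0,1]] (sigmoid) or [T in [-1,1]] (tanh). *)
Lemma rho_bound a t : Rabs (rho a t) <= 1.
Proof.
  destruct a; simpl.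
  - pose proof (sigmoid_range t). apply Rabs_le; lra.
  - pose proof (tanh_range t). apply Rabs_le; lra.
Qed.

Lemma rho1_bound a t : Rabs (rho1 a t) <= 1.
Proof.
  destruct a; simpl.
  - pose proof (sigmoid_range t). apply Rabs_le; nra.
  - pose proof (tanh_range t). apply Rabs_le; nra.
Qed.

Lemma rho2_bound a t : Rabs (rho2 a t) <= kappa a.
Proof.
  destruct a; simpl.
  - pose proof (sigmoid_range t) as Hs. set (s := sigmoid t) in *.
    assert (Hvar : 0 <= s * (1 - s) <= /4) by (pose proof (pow2_ge_0 (s - /2)); nra).
    apply Rabs_le; split; nra.
  - (* with [u = T^2]: [(2 T (1 - T^2))^2 = 4 u (1 - u) (1 - u) <= 1] *)
    pose proof (tanh_range t) as HT. set (T := tanhR t) in *.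
    assert (Hu : 0 <= T ^ 2 <= 1) by nra.
    assert (Hvar : T ^ 2 * (1 - T ^ 2) <= /4) by (pose proof (pow2_ge_0 (T ^ 2 - /2)); nra).
    assert (Hsq : (2 * T * (1 - T ^ 2)) ^ 2 <= 1).
    { replace ((2 * T * (1 - T ^ 2)) ^ 2) with (4 * (T ^ 2 * (1 - T ^ 2)) * (1 - T ^ 2))
        by ring. nra. }
    apply Rabs_le; split; nra.
Qed.

Lemma rho3_bound a t : Rabs (rho3 a t) <= 2 * kappa a.
Proof.
  destruct a; simpl.
  - pose proof (sigmoid_range t) as Hs. set (s := sigmoid t) in *.
    assert (Hvar : 0 <= s * (1 - s) <= /4) by (pose proof (pow2_ge_0 (s - /2)); nra).
    assert (-1 <= 1 - 6 * s + 6 * s ^ 2 <= 1) by nra.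
    apply Rabs_le; split; nra.
  - pose proof (tanh_range t) as HT. set (T := tanhR t) in *.
    assert (Hu : 0 <= T ^ 2 <= 1) by nra.
    apply Rabs_le; split; nra.
Qed.

Lemma lipschitz_of_derivative (f f' : R -> R) C :
  (forall y, is_derive f y (f' y)) -> (forall y, Rabs (f' y) <= C) ->
  forall u v, Rabs (f u - f v) <= C * Rabs (u - v).
Proof.
  intros Hd Hb u v.
  destruct (MVT_gen f v u f') as [c [_ Hc]].
  - intros; apply Hd.
  - intros y _. apply derivable_continuous_pt. exists (f' y). apply is_derive_Reals, Hd.
  - rewrite Hc, Rabs_mult. apply Rmult_le_compat_r; [apply Rabs_pos|apply Hb].
Qed.

Lemma activation_lipschitz a z z' :
  Rabs (rho a z - rho a z') <= Rabs (z - z') /\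
  Rabs (rho1 a z - rho1 a z') <= kappa a * Rabs (z - z') /\
  Rabs (rho2 a z - rho2 a z') <= 2 * kappa a * Rabs (z - z').
Proof.
  split; [|split].
  - rewrite <- (Rmult_1_l (Rabs (z - z'))).
    apply (lipschitz_of_derivative (rho a) (rho1 a)); [apply rho_derive | apply rho1_bound].
  - apply (lipschitz_of_derivative (rho1 a) (rho2 a)); [apply rho1_derive | apply rho2_bound].
  - apply (lipschitz_of_derivative (rho2 a) (rho3 a)); [apply rho2_derive | apply rho3_bound].
Qed.

Definition wsum (ns : nat -> nat) (th : params) (k : nat) (v : nat -> R) (i : nat) : R :=
  sumR (ns k) (fun j => pA th (S k) i j * v j).

Lemma is_derive_constR (c t : R) : is_derive (fun _ => c) t 0.
Proof. apply is_derive_Reals, derivable_pt_lim_const. Qed.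

Lemma is_derive_idR (t : R) : is_derive (fun y => y) t 1.
Proof. apply is_derive_Reals, derivable_pt_lim_id. Qed.

Lemma is_derive_plusR (f g : R -> R) t df dg :
  is_derive f t df -> is_derive g t dg -> is_derive (fun y => f y + g y) t (df + dg).
Proof. intros. apply is_derive_Reals, derivable_pt_lim_plus; apply is_derive_Reals; auto. Qed.

Lemma is_derive_multR (f g : R -> R) t df dg :
  is_derive f t df -> is_derive g t dg ->
  is_derive (fun y => f y * g y) t (df * g t + f t * dg).
Proof. intros. apply is_derive_Reals, derivable_pt_lim_mult; apply is_derive_Reals; auto. Qed.

Lemma is_derive_compR (f g : R -> R) t df dg :
  is_derive f (g t) df -> is_derive g t dg -> is_derive (fun y => f (g y)) t (df * dg).
Proof. intros. apply is_derive_Reals, (derivable_pt_lim_comp g f); apply is_derive_Reals; auto. Qed.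

Lemma is_derive_sumR n (F : nat -> R -> R) (F' : nat -> R) t :
  (forall j, (j < n)%nat -> is_derive (F j) t (F' j)) ->
  is_derive (fun s => sumR n (fun j => F j s)) t (sumR n F').
Proof.
  induction n as [|n IH]; intros H; simpl.
  - apply is_derive_constR.
  - apply (is_derive_plusR (fun s => sumR n (fun j => F j s)) (F n)).
    + apply IH; intros; apply H; lia.
    + apply H; lia.
Qed.

Lemma is_derive_wsum ns th k (v : R -> nat -> R) (v' : nat -> R) i t :
  (forall j, is_derive (fun s => v s j) t (v' j)) ->
  is_derive (fun s => wsum ns th k (v s) i) t (wsum ns th k v' i).
Proof.
  intros Hv. apply (is_derive_sumR _ (fun j s => pA th (S k) i j * v s j)).
  intros j _. apply is_derive_scal, Hv.
Qed.

Section Derivatives.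
Variables (a : activation) (ns : nat -> nat) (th : params) (x : nat -> R) (p : nat).

Definition layer (k : nat) (t : R) : nat -> R := hidden a ns th k (upd x p t).

Definition preact (k : nat) (t : R) (i : nat) : R :=
  wsum ns th k (layer k t) i + pb th (S k) i.

Fixpoint d1 (k : nat) (t : R) : nat -> R :=
  match k with
  | O => fun i => if Nat.eqb i p then 1 else 0
  | S k => fun i => rho1 a (preact k t i) * wsum ns th k (d1 k t) i
  end.

Fixpoint d2 (k : nat) (t : R) : nat -> R :=
  match k with
  | O => fun _ => 0
  | S k => fun i => rho2 a (preact k t i) * wsum ns th k (d1 k t) i ^ 2
                  + rho1 a (preact k t i) * wsum ns th k (d2 k t) i
  end.

Lemma layer_derivatives k : forall i t,
  is_derive (fun s => layer k s i) t (d1 k t i) /\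
  is_derive (fun s => d1 k s i) t (d2 k t i).
Proof.
  induction k as [|k IH]; intros i t.
  - unfold layer, upd; simpl. destruct (Nat.eqb i p).
    + split; [apply is_derive_idR | apply is_derive_constR].
    + split; apply is_derive_constR.
  - assert (Hz : forall s, is_derive (fun s => preact k s i) s (wsum ns th k (d1 k s) i)).
    { intros s. rewrite <- (Rplus_0_r (wsum ns th k (d1 k s) i)).
      apply is_derive_plusR; [|apply is_derive_constR].
      apply is_derive_wsum. intros j; apply IH. }
    split; cbn [d1 d2].
    + apply (is_derive_compR (rho a) (fun s => preact k s i)); [apply rho_derive|apply Hz].
    + replace (rho2 a (preact k t i) * wsum ns th k (d1 k t) i ^ 2
               + rho1 a (preact k t i) * wsum ns th k (d2 k t) i)
        with (rho2 a (preact k t i) * wsum ns th k (d1 k t) i * wsum ns th k (d1 k t) i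
              + rho1 a (preact k t i) * wsum ns th k (d2 k t) i) by ring.
      apply (is_derive_multR (fun s => rho1 a (preact k s i))
                             (fun s => wsum ns th k (d1 k s) i)).
      * apply (is_derive_compR (rho1 a) (fun s => preact k s i)); [apply rho1_derive|apply Hz].
      * apply is_derive_wsum. intros j; apply IH.
Qed.

(** The second partial derivative of the output: the output layer is affine,
    so [dxx f = A^(L) f^(L-1)''] with [L = K + 1]. *)
Lemma dxx_net K : dxx (net a ns (S K) th) p x = wsum ns th K (d2 K (x p)) 0.
Proof.
  unfold dxx, net. replace (S K - 1)%nat with K by lia. simpl Derive_n.
  rewrite (Derive_ext _ (fun t => wsum ns th K (d1 K t) 0)).
  - apply is_derive_unique, is_derive_wsum. intros j; apply layer_derivatives.
  - intros t. apply is_derive_unique. rewrite <- (Rplus_0_r (wsum ns th K (d1 K t) 0)).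
    apply is_derive_plusR; [|apply is_derive_constR].
    apply is_derive_wsum. intros j; apply layer_derivatives.
Qed.

End Derivatives.

Definition weights_bounded (ns : nat -> nat) (th : params) (Rb : R) (k : nat) : Prop :=
  forall i j, (i < ns (S k))%nat -> (j < ns k)%nat -> Rabs (pA th (S k) i j) <= Rb.

Lemma weights_bounded_of_params ns L Rb th :
  params_bounded ns L Rb th -> forall k, (k < L)%nat -> weights_bounded ns th Rb k.
Proof.
  intros Hth k Hk i j Hi Hj. apply (proj1 (Hth (S k) ltac:(lia))); auto.
  replace (S k - 1)%nat with k by lia. exact Hj.
Qed.

Lemma wsum_bound ns th Rb k v i : 0 <= Rb ->
  weights_bounded ns th Rb k -> (i < ns (S k))%nat ->
  Rabs (wsum ns th k v i) <= Rb * sumR (ns k) (fun j => Rabs (v j)).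
Proof. intros HR HA Hi. apply dot_bound_l1; [auto| |apply Rle_refl]. intros; apply HA; auto. Qed.

Lemma sum_rows_bound n f B :
  (forall i, (i < n)%nat -> Rabs (f i) <= B) -> sumR n (fun i => Rabs (f i)) <= INR n * B.
Proof. intros H. rewrite <- sumR_const. apply sumR_le; auto. Qed.

(** A natural number [n] satisfies [n <= n^m] ([m >= 1]); this lets a sum
    over the [n] units of a layer be absorbed into [pi^m]. *)
Lemma INR_le_pow n m : (1 <= m)%nat -> INR n <= INR n ^ m.
Proof.
  intros Hm. destruct n as [|n].
  - destruct m; [lia|]. simpl; lra.
  - rewrite <- (pow_1 (INR (S n))) at 1. apply Rle_pow; [|lia].
    rewrite S_INR. pose proof (pos_INR n). lra.
Qed.

(** [gain ns Rb k = Rb^k * pi_k], the size of the first derivative of layer [k]. *)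
Definition gain (ns : nat -> nat) (Rb : R) (k : nat) : R := Rb ^ k * INR (prod_widths ns k).

Lemma gain_S ns Rb k : gain ns Rb (S k) = Rb * gain ns Rb k * INR (ns (S k)).
Proof. unfold gain. simpl prod_widths. rewrite mult_INR. simpl pow. ring. Qed.

Lemma gain_nonneg ns Rb k : 0 <= Rb -> 0 <= gain ns Rb k.
Proof. intros. unfold gain. apply Rmult_le_pos; [apply pow_le; lra | apply pos_INR]. Qed.

Lemma sum_layer_scaling c R U n m : 0 <= c -> 0 <= R -> 0 <= U -> n <= n ^ S m ->
  R * (n * (c * R ^ m * U ^ S m)) <= c * (R * U * n) ^ S m.
Proof.
  intros Hc HR HU Hn. rewrite !Rpow_mult_distr.
  assert (H0 : 0 <= c * R ^ S m * U ^ S m)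
    by (apply Rmult_le_pos; [apply Rmult_le_pos|]; auto; apply pow_le; auto).
  replace (R * (n * (c * R ^ m * U ^ S m))) with ((c * R ^ S m * U ^ S m) * n)
    by (simpl; ring).
  replace (c * (R ^ S m * U ^ S m * n ^ S m)) with ((c * R ^ S m * U ^ S m) * n ^ S m)
    by ring.
  apply Rmult_le_compat_l; auto.
Qed.

Lemma forward_second_order_step kp K R U : 0 <= kp -> 0 <= K -> 1 <= R ->
  kp * (R * U) ^ 2 + 1 * (R * (kp * K * U ^ 2)) <= R * (kp * (K + 1) * R ^ 1 * U ^ 2).
Proof.
  intros Hk HK HR.
  assert (H0 : 0 <= kp * K * U ^ 2)
    by (apply Rmult_le_pos; [apply Rmult_le_pos; lra | apply pow2_ge_0]).
  assert (R * (kp * K * U ^ 2) <= R ^ 2 * (kp * K * U ^ 2)) by (apply Rmult_le_compat_r; nra).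
  replace (R * (kp * (K + 1) * R ^ 1 * U ^ 2)) with (kp * (R * U) ^ 2 + R ^ 2 * (kp * K * U ^ 2))
    by ring.
  lra.
Qed.

Section ForwardBounds.
Variables (a : activation) (ns : nat -> nat) (th : params) (x : nat -> R) (p : nat) (Rb : R).
Hypothesis Rb_ge1 : 1 <= Rb.

Definition forward_bounds (k : nat) : Prop :=
  (forall j, (j < ns k)%nat -> Rabs (layer a ns th x p k (x p) j) <= 1) /\
  sumR (ns k) (fun j => Rabs (d1 a ns th x p k (x p) j)) <= gain ns Rb k /\
  sumR (ns k) (fun j => Rabs (d2 a ns th x p k (x p) j))
    <= kappa a * INR k * gain ns Rb k ^ 2.

(** The input derivative [d x / d x_p] is the [p]-th unit vector. *)
Lemma l1_unit_vector n : sumR n (fun j => Rabs (if Nat.eqb j p then 1 else 0)) <= 1.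
Proof.
  assert (H : sumR n (fun j => Rabs (if Nat.eqb j p then 1 else 0)) <= 1 /\
              ((n <= p)%nat -> sumR n (fun j => Rabs (if Nat.eqb j p then 1 else 0)) = 0)).
  { induction n as [|n [IH1 IH2]]; simpl; [split; [lra|auto]|].
    destruct (Nat.eqb n p) eqn:E.
    - apply Nat.eqb_eq in E; subst. rewrite IH2 by lia. rewrite Rabs_R1. split; [lra|lia].
    - rewrite Rabs_R0. split; [lra|]. intros. rewrite IH2 by lia. lra. }
  apply H.
Qed.

Lemma forward_bounds_0 : (forall j, (j < ns 0)%nat -> Rabs (x j) <= 1) -> forward_bounds 0.
Proof.
  intros Hx. split; [|split].
  - intros j Hj. unfold layer, upd; simpl.
    destruct (Nat.eqb j p) eqn:E; [apply Nat.eqb_eq in E; subst|]; auto.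
  - unfold gain; simpl. rewrite Rmult_1_l. apply l1_unit_vector.
  - simpl. rewrite (sumR_ext _ _ (fun _ => 0)) by (intros; apply Rabs_R0).
    rewrite sumR_const. lra.
Qed.

Lemma unit_inputs_bound k i :
  weights_bounded ns th Rb k -> forward_bounds k -> (i < ns (S k))%nat ->
  Rabs (wsum ns th k (d1 a ns th x p k (x p)) i) <= Rb * gain ns Rb k /\
  Rabs (wsum ns th k (d2 a ns th x p k (x p)) i) <= Rb * (kappa a * INR k * gain ns Rb k ^ 2).
Proof.
  intros HA [_ [F1 F2]] Hi.
  split; (eapply Rle_trans; [apply (wsum_bound _ _ Rb); [lra|exact HA|exact Hi]|]);
    apply Rmult_le_compat_l; lra.
Qed.

Lemma forward_bounds_S k :
  weights_bounded ns th Rb k -> forward_bounds k -> forward_bounds (S k).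
Proof.
  intros HA HF.
  pose proof (fun i Hi => unit_inputs_bound k i HA HF Hi) as Hin.
  pose proof (gain_nonneg ns Rb k ltac:(lra)) as HU.
  pose proof (kappa_range a) as Hk. pose proof (pos_INR k) as HK.
  assert (HRb : 0 <= Rb) by lra.
  unfold forward_bounds. rewrite gain_S, S_INR. split; [|split].
  - intros j _. apply rho_bound.
  - eapply Rle_trans; [apply (sum_rows_bound _ _ (Rb * gain ns Rb k))|].
    + intros i Hi. cbn [d1]. rewrite <- (Rmult_1_l (Rb * gain ns Rb k)).
      apply abs_mul_le; [apply rho1_bound | apply Hin, Hi].
    + right; ring.
  - eapply Rle_trans; [apply (sum_rows_bound _ _
        (Rb * (kappa a * (INR k + 1) * Rb ^ 1 * gain ns Rb k ^ 2)))|].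
    + intros i Hi. cbn [d2]. eapply Rle_trans; [apply Rabs_triang|].
      destruct (Hin i Hi) as [Hy Hw].
      assert (Hy2 : Rabs (wsum ns th k (d1 a ns th x p k (x p)) i ^ 2) <= (Rb * gain ns Rb k) ^ 2).
      { rewrite <- RPow_abs. apply pow_incr. split; [apply Rabs_pos | exact Hy]. }
      eapply Rle_trans; [apply Rplus_le_compat; apply abs_mul_le;
        [apply rho2_bound | exact Hy2 | apply rho1_bound | exact Hw]|].
      apply forward_second_order_step; lra.
    + eapply Rle_trans; [|apply sum_layer_scaling; auto; [nra | apply INR_le_pow; lia]].
      right; ring.
Qed.

Lemma forward_bounds_upto K :
  (forall j, (j < ns 0)%nat -> Rabs (x j) <= 1) ->
  (forall k, (k < K)%nat -> weights_bounded ns th Rb k) ->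
  forall k, (k <= K)%nat -> forward_bounds k.
Proof.
  intros Hx HA k. induction k as [|k IH]; intros Hk.
  - apply forward_bounds_0, Hx.
  - apply forward_bounds_S; [apply HA; lia | apply IH; lia].
Qed.

End ForwardBounds.

Definition row_dist (ns : nat -> nat) (th th' : params) (k i : nat) : R :=
  sumR (ns k) (fun j => Rabs (pA th (S k) i j - pA th' (S k) i j))
  + Rabs (pb th (S k) i - pb th' (S k) i).

Definition layer_dist (ns : nat -> nat) (th th' : params) (k : nat) : R :=
  sumR (ns (S k)) (row_dist ns th th' k).

Definition cumul_dist (ns : nat -> nat) (th th' : params) (K : nat) : R :=
  sumR K (layer_dist ns th th').

Lemma row_dist_nonneg ns th th' k i : 0 <= row_dist ns th th' k i.
Proof.
  unfold row_dist. pose proof (Rabs_pos (pb th (S k) i - pb th' (S k) i)).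
  pose proof (sumR_abs_nonneg (ns k) (fun j => pA th (S k) i j - pA th' (S k) i j)). lra.
Qed.

Lemma layer_dist_nonneg ns th th' k : 0 <= layer_dist ns th th' k.
Proof. apply sumR_nonneg. intros; apply row_dist_nonneg. Qed.

Lemma cumul_dist_nonneg ns th th' K : 0 <= cumul_dist ns th th' K.
Proof. apply sumR_nonneg. intros; apply layer_dist_nonneg. Qed.

Lemma row_dist_le_layer ns th th' k i :
  (i < ns (S k))%nat -> row_dist ns th th' k i <= layer_dist ns th th' k.
Proof. intros Hi. apply term_le_sumR; auto. intros; apply row_dist_nonneg. Qed.

Lemma mul_perturbation u u' v v' Du Bu Bv Dv :
  Rabs (u - u') <= Du -> Rabs u' <= Bu -> Rabs v <= Bv -> Rabs (v - v') <= Dv ->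
  Rabs (u * v - u' * v') <= Du * Bv + Bu * Dv.
Proof.
  intros H1 H2 H3 H4. replace (u * v - u' * v') with ((u - u') * v + u' * (v - v')) by ring.
  eapply Rle_trans; [apply Rabs_triang|].
  apply Rplus_le_compat; apply abs_mul_le; assumption.
Qed.

Lemma square_perturbation y y' Y Dy :
  Rabs y <= Y -> Rabs y' <= Y -> Rabs (y - y') <= Dy -> Rabs (y ^ 2 - y' ^ 2) <= 2 * Y * Dy.
Proof.
  intros Hy Hy' Hd. replace (y ^ 2 - y' ^ 2) with ((y + y') * (y - y')) by ring.
  rewrite Rabs_mult. pose proof (Rabs_triang y y'). pose proof (Rabs_pos (y - y')).
  pose proof (Rabs_pos (y + y')). apply Rmult_le_compat; lra.
Qed.

Lemma prod_widths_pos_down ns K k :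
  (1 <= prod_widths ns K)%nat -> (k <= K)%nat -> (1 <= prod_widths ns k)%nat.
Proof.
  induction K as [|K IH]; intros HK Hk.
  - replace k with 0%nat by lia. exact HK.
  - destruct (Nat.eq_dec k (S K)) as [->|Hne]; [exact HK|].
    apply IH; [|lia]. simpl in HK. nia.
Qed.

(** Then [U_k >= 1], which lets lower powers of [U_k] be absorbed into higher ones. *)
Lemma gain_ge1 ns Rb k : 1 <= Rb -> (1 <= prod_widths ns k)%nat -> 1 <= gain ns Rb k.
Proof.
  intros HR Hk. unfold gain. apply le_INR in Hk. simpl INR in Hk.
  pose proof (pow_R1_Rle Rb k HR). nra.
Qed.

(** Routine real arithmetic collecting the terms of the perturbation recursion
    into the inductive invariant.  The [absorb] lemmas add the contribution [e]
    of the new layer's parameters to [E]; the [step] lemmas collect the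
    product-rule terms of [f'] and [f''] of one unit (with [D = E_(k+1)],
    [R = Rb] and [U = U_k]). *)
Lemma absorb_first_order K E e U : 0 <= K -> 0 <= E -> 0 <= e -> 0 <= U ->
  2 * K * E * U ^ 2 + e * U ^ 2 <= (2 * K + 1) * (E + e) * U ^ 2.
Proof. intros. assert (0 <= K * e * U ^ 2) by (apply Rmult_le_pos; nra). nra. Qed.

Lemma absorb_second_order k K E e U : 0 <= k -> 0 <= K -> 0 <= E -> 0 <= e -> 0 <= U ->
  k * (3 * K ^ 2 + K) * E * U ^ 3 + e * (k * K * U ^ 3)
    <= k * (3 * K ^ 2 + 2 * K) * (E + e) * U ^ 3.
Proof.
  intros. assert (0 <= k * U ^ 3) by (apply Rmult_le_pos; [|apply pow_le]; lra).
  assert (0 <= K * E + (3 * K ^ 2 + K) * e) by nra. nra.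
Qed.

Lemma first_order_step kp K D R U : 0 <= kp <= 1 -> 0 <= K -> 0 <= D -> 1 <= R -> 0 <= U ->
  kp * D * U * (R * U) + (2 * K + 1) * D * U ^ 2 <= (2 * K + 2) * D * R * U ^ 2.
Proof.
  intros. assert (0 <= D * U ^ 2) by (apply Rmult_le_pos; nra).
  assert (kp * R + 2 * K + 1 <= (2 * K + 2) * R) by nra. nra.
Qed.

Lemma second_order_step kp K D R U : 0 <= kp <= 1 -> 0 <= K -> 0 <= D -> 1 <= R -> 0 <= U ->
  2 * kp * (D * U) * (R * U) ^ 2 + kp * (2 * (R * U) * ((2 * K + 1) * D * U ^ 2))
  + (kp * (D * U) * (R * (kp * K * U ^ 2)) + 1 * (kp * (3 * K ^ 2 + 2 * K) * D * U ^ 3))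
  <= kp * (3 * K ^ 2 + 7 * K + 4) * D * R ^ 2 * U ^ 3.
Proof.
  intros Hk HK HD HR HU.
  assert (HkDU : 0 <= kp * D * U ^ 3) by (apply Rmult_le_pos; [nra|apply pow_le; lra]).
  assert (HR2 : R <= R ^ 2) by nra.
  assert (HK2 : 0 <= 3 * K ^ 2 + 2 * K) by nra.
  assert (Hbr : 2 * R ^ 2 + 2 * R * (2 * K + 1) + kp * R * K + (3 * K ^ 2 + 2 * K)
          <= (3 * K ^ 2 + 7 * K + 4) * R ^ 2).
  { assert (HRK : 0 <= R * K) by (apply Rmult_le_pos; lra).
    assert (kp * R * K <= R * K) by (rewrite Rmult_assoc; nra).
    assert (R * K <= K * R ^ 2) by nra.
    assert (3 * K ^ 2 + 2 * K <= (3 * K ^ 2 + 2 * K) * R ^ 2) by nra.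
    nra. }
  replace (2 * kp * (D * U) * (R * U) ^ 2 + kp * (2 * (R * U) * ((2 * K + 1) * D * U ^ 2))
           + (kp * (D * U) * (R * (kp * K * U ^ 2)) + 1 * (kp * (3 * K ^ 2 + 2 * K) * D * U ^ 3)))
    with (kp * D * U ^ 3 * (2 * R ^ 2 + 2 * R * (2 * K + 1) + kp * R * K + (3 * K ^ 2 + 2 * K)))
    by ring.
  replace (kp * (3 * K ^ 2 + 7 * K + 4) * D * R ^ 2 * U ^ 3)
    with (kp * D * U ^ 3 * ((3 * K ^ 2 + 7 * K + 4) * R ^ 2)) by ring.
  apply Rmult_le_compat_l; assumption.
Qed.

Section Perturbation.
Variables (a : activation) (ns : nat -> nat) (th th' : params) (x : nat -> R) (p : nat)
  (Rb : R).
Hypothesis Rb_ge1 : 1 <= Rb.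

Local Notation val t k := (layer a ns t x p k (x p)).
Local Notation der1 t k := (d1 a ns t x p k (x p)).
Local Notation der2 t k := (d2 a ns t x p k (x p)).
Local Notation U k := (gain ns Rb k).
Local Notation E k := (cumul_dist ns th th' k).

(** Invariant at layer [k]: the l1 distances between the two networks' layer
    values, first and second derivatives, weighted by [Rb] (the size of the
    next layer's weights), are at most [E_k U_k], [2 k E_k U_k^2] and
    [kappa (3k^2 + k) E_k U_k^3], where [E_k] is the l1 parameter distance of
    the first [k] layers. *)
Definition perturbation_bounds (k : nat) : Prop :=
  Rb * sumR (ns k) (fun j => Rabs (val th k j - val th' k j)) <= E k * U k /\
  Rb * sumR (ns k) (fun j => Rabs (der1 th k j - der1 th' k j))
    <= 2 * INR k * E k * U k ^ 2 /\
  Rb * sumR (ns k) (fun j => Rabs (der2 th k j - der2 th' k j))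
    <= kappa a * (3 * INR k ^ 2 + INR k) * E k * U k ^ 3.

Lemma perturbation_bounds_0 : perturbation_bounds 0.
Proof.
  assert (Hzero : forall f : nat -> R, Rb * sumR (ns 0) (fun j => Rabs (f j - f j)) = 0).
  { intros f. rewrite (sumR_ext _ _ (fun _ => 0)), sumR_const; [ring|].
    intros; rewrite Rminus_diag, Rabs_R0; reflexivity. }
  unfold perturbation_bounds, cumul_dist. simpl sumR. simpl INR.
  rewrite !Hzero. repeat split; right; ring.
Qed.

Lemma wsum_perturbation k i (v v' : nat -> R) M :
  0 <= M -> weights_bounded ns th' Rb k -> (i < ns (S k))%nat ->
  (forall j, (j < ns k)%nat -> Rabs (v j) <= M) ->
  Rabs (wsum ns th k v i - wsum ns th' k v' i) + Rabs (pb th (S k) i - pb th' (S k) i) * M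
    <= layer_dist ns th th' k * M + Rb * sumR (ns k) (fun j => Rabs (v j - v' j)).
Proof.
  intros HM HA' Hi Hv.
  pose proof (dot_perturbation (ns k) (fun j => pA th (S k) i j) (fun j => pA th' (S k) i j)
    v v' M Rb _ ltac:(lra) ltac:(intros; apply HA'; auto) Hv (Rle_refl _)) as Hdot.
  pose proof (row_dist_le_layer ns th th' k i Hi) as Hrow. unfold row_dist in Hrow.
  assert (Hrow' : (sumR (ns k) (fun j => Rabs (pA th (S k) i j - pA th' (S k) i j))
                   + Rabs (pb th (S k) i - pb th' (S k) i)) * M
                  <= layer_dist ns th th' k * M) by (apply Rmult_le_compat_r; lra).
  unfold wsum. lra.
Qed.

(** The three inputs of unit [i] of layer [k+1] -- the pre-activation [z] and
    the weighted sums [y = A f'], [w = A f''] -- move by at most [E_(k+1) U_k],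
    [(2k+1) E_(k+1) U_k^2] and [kappa (3k^2+2k) E_(k+1) U_k^3];
    [E_(k+1) = E_k + (distance of layer k+1)] absorbs the new parameters. *)
Lemma preact_perturbation k i :
  weights_bounded ns th' Rb k -> forward_bounds a ns th x p Rb k ->
  perturbation_bounds k -> 1 <= U k -> (i < ns (S k))%nat ->
  Rabs (preact a ns th x p k (x p) i - preact a ns th' x p k (x p) i) <= E (S k) * U k.
Proof.
  intros HA' [F0 _] [G0 _] HU Hi.
  pose proof (wsum_perturbation k i (val th k) (val th' k) 1 ltac:(lra) HA' Hi F0) as Hw.
  pose proof (layer_dist_nonneg ns th th' k).
  change (E (S k)) with (E k + layer_dist ns th th' k).
  unfold preact.
  match goal with |- Rabs (?s + ?b - (?s' + ?b')) <= _ =>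
    replace (s + b - (s' + b')) with ((s - s') + (b - b')) by ring end.
  eapply Rle_trans; [apply Rabs_triang|]. nra.
Qed.

Lemma slope_input_perturbation k i :
  weights_bounded ns th' Rb k -> forward_bounds a ns th x p Rb k ->
  perturbation_bounds k -> 1 <= U k -> (i < ns (S k))%nat ->
  Rabs (wsum ns th k (der1 th k) i - wsum ns th' k (der1 th' k) i)
    <= (2 * INR k + 1) * E (S k) * U k ^ 2.
Proof.
  intros HA' [_ [F1 _]] [_ [G1 _]] HU Hi.
  assert (Hsup : forall j, (j < ns k)%nat -> Rabs (der1 th k j) <= U k)
    by (intros; eapply Rle_trans; [apply abs_le_l1|]; eauto).
  pose proof (wsum_perturbation k i _ (der1 th' k) (U k) ltac:(lra) HA' Hi Hsup) as Hw.
  pose proof (absorb_first_order (INR k) (E k) (layer_dist ns th th' k) (U k) (pos_INR k)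
    (cumul_dist_nonneg ns th th' k) (layer_dist_nonneg ns th th' k) ltac:(lra)).
  pose proof (layer_dist_nonneg ns th th' k).
  pose proof (Rabs_pos (pb th (S k) i - pb th' (S k) i)).
  assert (layer_dist ns th th' k * U k <= layer_dist ns th th' k * U k ^ 2)
    by (apply Rmult_le_compat_l; nra).
  change (E (S k)) with (E k + layer_dist ns th th' k). nra.
Qed.

Lemma curvature_input_perturbation k i :
  weights_bounded ns th' Rb k -> forward_bounds a ns th x p Rb k ->
  perturbation_bounds k -> 1 <= U k -> (i < ns (S k))%nat ->
  Rabs (wsum ns th k (der2 th k) i - wsum ns th' k (der2 th' k) i)
    <= kappa a * (3 * INR k ^ 2 + 2 * INR k) * E (S k) * U k ^ 3.
Proof.
  intros HA' [_ [_ F2]] [_ [_ G2]] HU Hi.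
  pose proof (kappa_range a) as Hk. pose proof (pos_INR k) as HK.
  assert (HM : 0 <= kappa a * INR k * U k ^ 2)
    by (apply Rmult_le_pos; [apply Rmult_le_pos; lra | apply pow2_ge_0]).
  assert (Hsup : forall j, (j < ns k)%nat -> Rabs (der2 th k j) <= kappa a * INR k * U k ^ 2)
    by (intros; eapply Rle_trans; [apply abs_le_l1|]; eauto).
  pose proof (wsum_perturbation k i _ (der2 th' k) _ HM HA' Hi Hsup) as Hw.
  pose proof (absorb_second_order (kappa a) (INR k) (E k) (layer_dist ns th th' k) (U k)
    (proj1 Hk) HK (cumul_dist_nonneg ns th th' k) (layer_dist_nonneg ns th th' k) ltac:(lra)).
  pose proof (layer_dist_nonneg ns th th' k).
  assert (0 <= Rabs (pb th (S k) i - pb th' (S k) i) * (kappa a * INR k * U k ^ 2))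
    by (apply Rmult_le_pos; [apply Rabs_pos | exact HM]).
  assert (layer_dist ns th th' k * (kappa a * INR k * U k ^ 2)
          <= layer_dist ns th th' k * (kappa a * INR k * U k ^ 3)).
  { apply Rmult_le_compat_l; [lra|]. apply Rmult_le_compat_l; [nra|].
    simpl. nra. }
  change (E (S k)) with (E k + layer_dist ns th th' k). lra.
Qed.

(** Perturbation of unit [i] of layer [k+1]: combine the input perturbations
    with the Lipschitz bounds of [rho], [rho'], [rho''] and the product rule,
    [f' = rho'(z) y] and [f'' = rho''(z) y^2 + rho'(z) w]. *)
Lemma unit_perturbation k i :
  weights_bounded ns th Rb k -> weights_bounded ns th' Rb k ->
  forward_bounds a ns th x p Rb k -> forward_bounds a ns th' x p Rb k ->
  perturbation_bounds k -> 1 <= U k -> (i < ns (S k))%nat ->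
  Rabs (val th (S k) i - val th' (S k) i) <= E (S k) * U k /\
  Rabs (der1 th (S k) i - der1 th' (S k) i) <= (2 * INR k + 2) * E (S k) * Rb * U k ^ 2 /\
  Rabs (der2 th (S k) i - der2 th' (S k) i)
    <= kappa a * (3 * INR k ^ 2 + 7 * INR k + 4) * E (S k) * Rb ^ 2 * U k ^ 3.
Proof.
  intros HA HA' HF HF' HG HU Hi.
  pose proof (preact_perturbation k i HA' HF HG HU Hi) as Hz.
  pose proof (slope_input_perturbation k i HA' HF HG HU Hi) as Hy.
  pose proof (curvature_input_perturbation k i HA' HF HG HU Hi) as Hw.
  destruct (unit_inputs_bound a ns th x p Rb Rb_ge1 k i HA HF Hi) as [Hyb Hwb].
  destruct (unit_inputs_bound a ns th' x p Rb Rb_ge1 k i HA' HF' Hi) as [Hyb' _].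
  pose proof (cumul_dist_nonneg ns th th' (S k)) as HD.
  pose proof (kappa_range a) as Hk. pose proof (pos_INR k) as HK.
  set (z := preact a ns th x p k (x p) i) in *.
  set (z' := preact a ns th' x p k (x p) i) in *.
  set (y := wsum ns th k (der1 th k) i) in *.
  set (y' := wsum ns th' k (der1 th' k) i) in *.
  destruct (activation_lipschitz a z z') as [L0 [L1 L2]].
  apply Rmult_le_compat_l with (r := kappa a) in Hz as L1z; [|lra].
  apply Rmult_le_compat_l with (r := 2 * kappa a) in Hz as L2z; [|lra].
  split; [|split].
  - change (Rabs (rho a z - rho a z') <= E (S k) * U k). lra.
  - change (Rabs (rho1 a z * y - rho1 a z' * y')
            <= (2 * INR k + 2) * E (S k) * Rb * U k ^ 2).
    eapply Rle_trans; [apply (mul_perturbation _ _ _ _ _ 1 _ _ (Rle_trans _ _ _ L1 L1z)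
                              (rho1_bound a z') Hyb Hy)|].
    pose proof (first_order_step (kappa a) (INR k) (E (S k)) Rb (U k) Hk HK HD Rb_ge1
      ltac:(lra)). lra.
  - set (w := wsum ns th k (der2 th k) i) in *.
    set (w' := wsum ns th' k (der2 th' k) i) in *.
    change (Rabs (rho2 a z * y ^ 2 + rho1 a z * w - (rho2 a z' * y' ^ 2 + rho1 a z' * w'))
            <= kappa a * (3 * INR k ^ 2 + 7 * INR k + 4) * E (S k) * Rb ^ 2 * U k ^ 3).
    replace (rho2 a z * y ^ 2 + rho1 a z * w - (rho2 a z' * y' ^ 2 + rho1 a z' * w'))
      with ((rho2 a z * y ^ 2 - rho2 a z' * y' ^ 2) + (rho1 a z * w - rho1 a z' * w')) by ring.
    eapply Rle_trans; [apply Rabs_triang|].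
    assert (Hy2 : Rabs (y ^ 2) <= (Rb * U k) ^ 2).
    { rewrite <- RPow_abs. apply pow_incr. split; [apply Rabs_pos | exact Hyb]. }
    eapply Rle_trans; [apply Rplus_le_compat;
      [apply (mul_perturbation _ _ _ _ _ _ _ _ (Rle_trans _ _ _ L2 L2z) (rho2_bound a z') Hy2
               (square_perturbation y y' _ _ Hyb Hyb' Hy))
      |apply (mul_perturbation _ _ _ _ _ _ _ _ (Rle_trans _ _ _ L1 L1z) (rho1_bound a z') Hwb Hw)]|].
    pose proof (second_order_step (kappa a) (INR k) (E (S k)) Rb (U k) Hk HK HD Rb_ge1
      ltac:(lra)). lra.
Qed.

Lemma perturbation_bounds_S k :
  weights_bounded ns th Rb k -> weights_bounded ns th' Rb k ->
  forward_bounds a ns th x p Rb k -> forward_bounds a ns th' x p Rb k ->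
  perturbation_bounds k -> 1 <= U k -> perturbation_bounds (S k).
Proof.
  intros HA HA' HF HF' HG HU.
  pose proof (fun i Hi => unit_perturbation k i HA HA' HF HF' HG HU Hi) as Hunit.
  pose proof (cumul_dist_nonneg ns th th' (S k)) as HD.
  pose proof (kappa_range a) as Hk. pose proof (pos_INR k) as HK.
  pose proof (pos_INR (ns (S k))) as Hn.
  assert (HRb : 0 <= Rb) by lra.
  unfold perturbation_bounds. rewrite gain_S, S_INR. split; [|split].
  - eapply Rle_trans; [apply Rmult_le_compat_l;
      [lra|apply (sum_rows_bound _ _ (E (S k) * U k)); intros i Hi; apply Hunit, Hi]|].
    right; ring.
  - eapply Rle_trans; [apply Rmult_le_compat_l;
      [lra|apply (sum_rows_bound _ _ ((2 * INR k + 2) * E (S k) * Rb ^ 1 * U k ^ 2));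
           intros i Hi; rewrite pow_1; apply Hunit, Hi]|].
    eapply Rle_trans; [apply sum_layer_scaling; try lra; [nra|apply INR_le_pow; lia]|].
    right; ring.
  - eapply Rle_trans; [apply Rmult_le_compat_l;
      [lra|apply (sum_rows_bound _ _
                  (kappa a * (3 * INR k ^ 2 + 7 * INR k + 4) * E (S k) * Rb ^ 2 * U k ^ 3));
           intros i Hi; apply Hunit, Hi]|].
    eapply Rle_trans; [apply sum_layer_scaling; try lra;
      [apply Rmult_le_pos; [apply Rmult_le_pos|]; nra|apply INR_le_pow; lia]|].
    right; ring.
Qed.

Lemma perturbation_bounds_upto K :
  (forall j, (j < ns 0)%nat -> Rabs (x j) <= 1) ->
  (forall k, (k < K)%nat -> weights_bounded ns th Rb k) ->
  (forall k, (k < K)%nat -> weights_bounded ns th' Rb k) ->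
  (1 <= prod_widths ns K)%nat ->
  forall k, (k <= K)%nat -> perturbation_bounds k.
Proof.
  intros Hx HA HA' HK k. induction k as [|k IH]; intros Hk.
  - apply perturbation_bounds_0.
  - apply perturbation_bounds_S; [apply HA; lia | apply HA'; lia
    | apply (forward_bounds_upto a ns th x p Rb Rb_ge1 K); auto; lia
    | apply (forward_bounds_upto a ns th' x p Rb Rb_ge1 K); auto; lia
    | apply IH; lia
    | apply gain_ge1; [exact Rb_ge1 | apply (prod_widths_pos_down ns K); [exact HK | lia]]].
Qed.

(** When [pi_K = 0] both second derivatives vanish. *)
Lemma output_perturbation K :
  (forall j, (j < ns 0)%nat -> Rabs (x j) <= 1) ->
  (forall k, (k <= K)%nat -> weights_bounded ns th Rb k) ->
  (forall k, (k <= K)%nat -> weights_bounded ns th' Rb k) ->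
  (0 < ns (S K))%nat ->
  Rabs (wsum ns th K (der2 th K) 0 - wsum ns th' K (der2 th' K) 0)
    <= kappa a * (3 * INR K ^ 2 + 2 * INR K) * E (S K) * U K ^ 3.
Proof.
  intros Hx HA HA' Hout.
  assert (HF : forall t, (forall k, (k <= K)%nat -> weights_bounded ns t Rb k) ->
                 forward_bounds a ns t x p Rb K)
    by (intros t Ht; apply (forward_bounds_upto a ns t x p Rb Rb_ge1 K);
        auto; intros; apply Ht; lia).
  destruct (Nat.eq_dec (prod_widths ns K) 0) as [Hzero|Hpos].
  - assert (HU0 : U K = 0) by (unfold gain; rewrite Hzero; simpl; ring).
    assert (Hvanish : forall t, (forall k, (k <= K)%nat -> weights_bounded ns t Rb k) ->
              Rabs (wsum ns t K (der2 t K) 0) <= 0).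
    { intros t Ht. destruct (HF t Ht) as [_ [_ F2]]. rewrite HU0 in F2.
      eapply Rle_trans; [apply (wsum_bound _ _ Rb); [lra|apply Ht; lia|exact Hout]|].
      replace 0 with (Rb * 0) by ring. apply Rmult_le_compat_l; [lra|].
      rewrite <- (Rmult_0_r (kappa a * INR K)). simpl in F2. lra. }
    rewrite HU0. unfold Rminus. eapply Rle_trans; [apply Rabs_triang|].
    rewrite Rabs_Ropp. pose proof (Hvanish th HA). pose proof (Hvanish th' HA'). simpl. lra.
  - apply (curvature_input_perturbation K 0).
    + apply HA'; lia.
    + apply HF, HA.
    + apply (perturbation_bounds_upto K); [exact Hx | intros; apply HA; lia
        | intros; apply HA'; lia | lia | lia].
    + apply gain_ge1; [exact Rb_ge1 | lia].
    + exact Hout.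
Qed.

End Perturbation.

Definition sq_row_dist (ns : nat -> nat) (th th' : params) (k i : nat) : R :=
  sumR (ns k) (fun j => (pA th (S k) i j - pA th' (S k) i j) ^ 2)
  + (pb th (S k) i - pb th' (S k) i) ^ 2.

Definition sq_layer_dist (ns : nat -> nat) (th th' : params) (k : nat) : R :=
  sumR (ns (S k)) (sq_row_dist ns th th' k).

Lemma sq_row_dist_nonneg ns th th' k i : 0 <= sq_row_dist ns th th' k i.
Proof.
  unfold sq_row_dist. pose proof (pow2_ge_0 (pb th (S k) i - pb th' (S k) i)).
  pose proof (sumR_nonneg (ns k) (fun j => (pA th (S k) i j - pA th' (S k) i j) ^ 2)
    ltac:(intros; apply pow2_ge_0)). lra.
Qed.

Lemma sq_layer_dist_nonneg ns th th' k : 0 <= sq_layer_dist ns th th' k.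
Proof. apply sumR_nonneg. intros; apply sq_row_dist_nonneg. Qed.

Lemma l1_sq_le_l2_sq n (v : nat -> R) :
  sumR n (fun j => Rabs (v j)) ^ 2 <= INR n * sumR n (fun j => v j ^ 2).
Proof.
  rewrite <- (Rmult_1_r (INR n)), <- sumR_const.
  apply cauchy_schwarz_sumR. intros j _.
  repeat split; [apply Rabs_pos | lra | apply pow2_ge_0 | rewrite pow2_abs; lra].
Qed.

Lemma row_dist_sq ns th th' k i :
  row_dist ns th th' k i ^ 2 <= (INR (ns k) + 1) * sq_row_dist ns th th' k i.
Proof.
  apply cauchy_schwarz_pair; try apply Rabs_pos; try apply sumR_abs_nonneg;
    try apply pow2_ge_0; try apply pos_INR; try lra.
  - apply sumR_nonneg; intros; apply pow2_ge_0.
  - apply l1_sq_le_l2_sq.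
  - rewrite pow2_abs. lra.
Qed.

Lemma layer_dist_sq ns th th' k :
  layer_dist ns th th' k ^ 2
    <= INR (ns (S k)) * (INR (ns k) + 1) * sq_layer_dist ns th th' k.
Proof.
  rewrite <- sumR_const. apply cauchy_schwarz_sumR. intros i _.
  pose proof (pos_INR (ns k)).
  repeat split; [apply row_dist_nonneg | lra | apply sq_row_dist_nonneg | apply row_dist_sq].
Qed.

Lemma num_params_INR ns L :
  INR (num_params ns L) = sumR L (fun k => INR (ns (S k)) * (INR (ns k) + 1)).
Proof.
  induction L as [|L IH]; [reflexivity|].
  change (num_params ns (S L)) with (num_params ns L + ns (S L) * ns L + ns (S L))%nat.
  simpl sumR. rewrite !plus_INR, mult_INR, IH. ring.
Qed.

Lemma cumul_dist_le_param_dist ns th th' L :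
  cumul_dist ns th th' L <= sqrt (INR (num_params ns L)) * param_dist ns L th th'.
Proof.
  assert (Htot : cumul_dist ns th th' L ^ 2
                 <= INR (num_params ns L) * sumR L (sq_layer_dist ns th th')).
  { rewrite num_params_INR. apply cauchy_schwarz_sumR. intros k _.
    pose proof (pos_INR (ns k)). pose proof (pos_INR (ns (S k))).
    repeat split; [apply layer_dist_nonneg | nra | apply sq_layer_dist_nonneg
                   | apply layer_dist_sq]. }
  change (param_dist ns L th th') with (sqrt (sumR L (sq_layer_dist ns th th'))).
  rewrite <- sqrt_mult by (try apply pos_INR; apply sumR_nonneg;
                           intros; apply sq_layer_dist_nonneg).
  rewrite <- (sqrt_pow2 (cumul_dist ns th th' L)) by apply cumul_dist_nonneg.
  apply sqrt_le_1_alt, Htot.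
Qed.

(** The constant of [output_perturbation] against the one of the theorem,
    using [kappa <= eta / 2]. *)
Lemma output_constant_le a K : 0 <= K ->
  kappa a * (3 * K ^ 2 + 2 * K) <= 2 * K * (K + 1) * eta a.
Proof.
  intros HK. pose proof (kappa_le_half_eta a). pose proof (kappa_range a).
  assert (0 <= 3 * K ^ 2 + 2 * K) by nra.
  assert (kappa a * (3 * K ^ 2 + 2 * K) <= eta a / 2 * (3 * K ^ 2 + 2 * K))
    by (apply Rmult_le_compat_r; lra).
  assert (0 <= eta a * (K ^ 2 + 2 * K)) by (apply Rmult_le_pos; nra).
  nra.
Qed.

Theorem lemma5p3 (a : activation) (d L : nat) (ns : nat -> nat) (Rb : R)
  (Omega : (nat -> R) -> Prop) (th th' : params) :
  1 <= Rb -> (2 <= L)%nat -> ns 0%nat = d -> ns L = 1%nat ->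
  (forall x, Omega x -> forall i, (i < d)%nat -> -1 < x i < 1) ->
  params_bounded ns L Rb th -> params_bounded ns L Rb th' ->
  forall (p : nat) (x : nat -> R), (p < d)%nat -> Omega x ->
  Rabs (dxx (net a ns L th) p x - dxx (net a ns L th') p x)
  <= 2 * INR (L - 1) * INR L * eta a * sqrt (INR (num_params ns L))
     * INR (prod_widths ns (L - 1)) ^ 3 * Rb ^ (3 * L - 3)
     * param_dist ns L th th'.
Proof.
  intros HR HL Hd HnL HOm Hth Hth' p x Hp Hx.
  destruct L as [|K]; [lia|].
  replace (S K - 1)%nat with K by lia.
  replace (3 * S K - 3)%nat with (K * 3)%nat by lia. rewrite pow_mult.
  rewrite !dxx_net.
  assert (Hx1 : forall j, (j < ns 0)%nat -> Rabs (x j) <= 1).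
  { intros j Hj. rewrite Hd in Hj. destruct (HOm x Hx j Hj). apply Rabs_le; lra. }
  eapply Rle_trans.
  { apply (output_perturbation a ns th th' x p Rb HR K Hx1);
      [intros; apply (weights_bounded_of_params ns (S K) Rb th Hth); lia
      |intros; apply (weights_bounded_of_params ns (S K) Rb th' Hth'); lia
      |rewrite HnL; lia]. }
  pose proof (output_constant_le a (INR K) (pos_INR K)) as Hc.
  pose proof (cumul_dist_le_param_dist ns th th' (S K)) as Hdist.
  pose proof (cumul_dist_nonneg ns th th' (S K)).
  pose proof (kappa_range a). pose proof (pos_INR K).
  assert (HU3 : 0 <= gain ns Rb K ^ 3) by (apply pow_le, gain_nonneg; lra).
  replace (gain ns Rb K ^ 3) with ((Rb ^ K) ^ 3 * INR (prod_widths ns K) ^ 3) in *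
    by (unfold gain; ring).
  rewrite S_INR.
  replace (2 * INR K * (INR K + 1) * eta a * sqrt (INR (num_params ns (S K)))
           * INR (prod_widths ns K) ^ 3 * (Rb ^ K) ^ 3 * param_dist ns (S K) th th')
    with (2 * INR K * (INR K + 1) * eta a
          * (sqrt (INR (num_params ns (S K))) * param_dist ns (S K) th th')
          * ((Rb ^ K) ^ 3 * INR (prod_widths ns K) ^ 3)) by ring.
  apply Rmult_le_compat_r; [exact HU3|].
  apply Rmult_le_compat; [nra | apply cumul_dist_nonneg | exact Hc | exact Hdist].
Qed.
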